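(* Let $n\ge2$ and let $\mathbf W$ be uniformly distributed on $\mathcal W^n$. Then for each $1\le j\le n-1$, \[ \mathbb E\left[\frac{B_j(\mathbf W)}{n}\right]=\frac{j}{\binom n2}, \] where $B_j(\mathbf w)$ is the number of leaves among the two children of the rank-$j$ internal node of $\mathbf w$.
   Context: $\mathcal W^n$ is the set of ranked leaf-labelled rooted binary tree topologies with leaves $\{1,\dots,n\}$: binary trees with $n-1$ internal nodes totally ordered by rank $1,\dots,n-1$ (rank 1 is the root; each internal node has larger rank than its parent). Its cardinality is $n!(n-1)!/2^{n-1}$. *)

From HB Require Import structures.
From mathcomp Require Import all_boot all_algebra.
Set Implicit Arguments. Unset Strict Implicit. Unset Printing Implicit Defensive.

(* Ranked leaf-labelled rooted binary trees.
   RLeaf a         : a leaf with label a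
   RNode k l r     : an internal node of rank k with children l and r. *)
Inductive rtree := RLeaf of nat | RNode of nat & rtree & rtree.

Scheme Equality for rtree.
HB.instance Definition _ := hasDecEq.Build rtree (compareP rtree_eq_dec).

Fixpoint leaves (t : rtree) : seq nat :=
  match t with RLeaf a => [:: a] | RNode _ l r => leaves l ++ leaves r end.

Fixpoint ranks (t : rtree) : seq nat :=
  match t with RLeaf _ => [::] | RNode k l r => k :: ranks l ++ ranks r end.

Definition child_ok (k : nat) (t : rtree) : bool :=
  match t with RLeaf _ => true | RNode k' _ _ => k < k' end.

Fixpoint rank_ok (t : rtree) : bool :=
  match t with
  | RLeaf _ => true
  | RNode k l r => [&& child_ok k l, child_ok k r, rank_ok l & rank_ok r]
  end.

Fixpoint minleaf (t : rtree) : nat :=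
  match t with RLeaf a => a | RNode _ l r => minn (minleaf l) (minleaf r) end.

(* Children are unordered (tree topologies): we use the canonical
   representative where the left child has the smaller minimal leaf label. *)
Fixpoint canon (t : rtree) : bool :=
  match t with
  | RLeaf _ => true
  | RNode _ l r => [&& minleaf l < minleaf r, canon l & canon r]
  end.

Definition inW (n : nat) (w : rtree) : bool :=
  [&& perm_eq (leaves w) (iota 1 n), perm_eq (ranks w) (iota 1 n.-1),
      rank_ok w & canon w].

Definition enumW (n : nat) (s : seq rtree) : Prop :=
  uniq s /\ forall w, (w \in s) = inW n w.

Definition is_leaf (t : rtree) : bool :=
  if t is RLeaf _ then true else false.

Fixpoint B (j : nat) (t : rtree) : nat :=
  match t with
  | RLeaf _ => 0
  | RNode k l r =>
      if k == j then is_leaf l + is_leaf r else B j l + B j r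
  end.

From mathcomp Require Import all_boot all_algebra.
From mathcomp Require Import zify ring.
Import GRing.Theory Num.Theory.
Local Open Scope ring_scope.
Set Implicit Arguments. Unset Strict Implicit.

(* In a tree with ranks 1..m the rank-m node is a cherry {a, b}; collapsing it
   to the leaf a is a bijection from the trees on a label set L, |L| = m + 1,
   onto the pairs a < b in L together with a tree on L \ {b} with ranks
   1..m-1. Hence the trees are enumerated recursively and
   |W^(m+1)| = C(m+1, 2) |W^m|.
   To average B_j, weight each leaf label x by phi x and sum phi over the leaf
   children of the rank-j node. Grafting the cherry {a, b} at the new top rank
   contributes phi a + phi b there, and below it only turns the leaf a into an
   internal node, i.e. replaces phi by phi with phi a := 0. Summing over the
   C(m+1, 2) pairs, induction on m shows that the total weight over all trees
   is |W| j / C(m+1, 2) * sum_L phi; phi = 1 gives the theorem. *)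

Fixpoint graft (a b k : nat) (t : rtree) : rtree :=
  match t with
  | RLeaf x => if x == a then RNode k (RLeaf a) (RLeaf b) else RLeaf x
  | RNode k' l r => RNode k' (graft a b k l) (graft a b k r)
  end.

Fixpoint ungraft (k : nat) (t : rtree) : rtree :=
  match t with
  | RLeaf x => RLeaf x
  | RNode k' l r =>
      if k' == k then RLeaf (minleaf t) else RNode k' (ungraft k l) (ungraft k r)
  end.

Fixpoint cherry (k : nat) (t : rtree) : option (nat * nat) :=
  match t with
  | RLeaf _ => None
  | RNode k' l r =>
      if k' == k then Some (minleaf l, minleaf r)
      else if cherry k l is Some p then Some p else cherry k r
  end.

Lemma notin_ranks_node k k' l r :
  (k \notin ranks (RNode k' l r)) = [&& k' != k, k \notin ranks l & k \notin ranks r].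
Proof. by rewrite inE mem_cat !negb_or eq_sym. Qed.

Lemma leaves_graft a b k t :
  perm_eq (leaves (graft a b k t)) (nseq (count_mem a (leaves t)) b ++ leaves t).
Proof.
elim: t => [x|k' l IHl r IHr] /=.
  by rewrite eq_sym; case: eqP => [->|_] //; rewrite perm_catC.
apply: perm_trans (perm_cat IHl IHr) _.
by apply/permP => p; rewrite !count_cat !count_nseq mulnDr addnACA.
Qed.

Lemma ranks_graft a b k t :
  perm_eq (ranks (graft a b k t)) (nseq (count_mem a (leaves t)) k ++ ranks t).
Proof.
elim: t => [x|k' l IHl r IHr] /=; first by case: (x == a).
have IHlr := perm_cat IHl IHr; rewrite -(perm_cons k') in IHlr.
apply: perm_trans IHlr _.
by apply/permP => p; rewrite !count_cat /= !count_cat !count_nseq mulnDr; lia.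
Qed.

Lemma rank_ok_graft a b k t :
  rank_ok t -> all (fun r => r < k)%N (ranks t) -> rank_ok (graft a b k t).
Proof.
have child_ok_graft k' u : child_ok k' u -> (k' < k)%N -> child_ok k' (graft a b k u).
  by case: u => [x|k'' l r] //= _ ?; case: eqP.
elim: t => [x|k' l IHl r IHr] /=; first by case: eqP.
case/and4P=> cl cr rl rr; rewrite all_cat => /andP[k'k /andP[al ar]].
by rewrite !child_ok_graft // IHl // IHr.
Qed.

Lemma minleaf_graft a b k t : (a < b)%N -> minleaf (graft a b k t) = minleaf t.
Proof.
move=> ab; elim: t => [x|k' l IHl r IHr] /=; last by rewrite IHl IHr.
by case: eqP => [->|] //=; rewrite /minn ab.
Qed.

Lemma canon_graft a b k t : (a < b)%N -> canon t -> canon (graft a b k t).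
Proof.
move=> ab; elim: t => [x|k' l IHl r IHr] /=; first by case: eqP => //= _; rewrite ab.
by case/and3P=> m cl cr; rewrite !minleaf_graft // m IHl // IHr.
Qed.

Lemma graft_id a b k t : a \notin leaves t -> graft a b k t = t.
Proof.
elim: t => [x|k' l IHl r IHr] /=; first by rewrite inE eq_sym => /negbTE ->.
by rewrite mem_cat negb_or => /andP[al ar]; rewrite IHl // IHr.
Qed.

Lemma ungraft_id k t : k \notin ranks t -> ungraft k t = t.
Proof.
elim: t => [x|k' l IHl r IHr] //.
by rewrite notin_ranks_node /= => /and3P[/negbTE -> kl kr]; rewrite IHl // IHr.
Qed.

Lemma minleaf_ungraft k t : minleaf (ungraft k t) = minleaf t.
Proof. by elim: t => [x|k' l IHl r IHr] //=; case: eqP => //= _; rewrite IHl IHr. Qed.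

Lemma rank_ok_ungraft k t : rank_ok t -> rank_ok (ungraft k t).
Proof.
have child_ok_ungraft k' u : child_ok k' u -> child_ok k' (ungraft k u).
  by case: u => //= k'' l r; case: eqP.
elim: t => [x|k' l IHl r IHr] //=; case: eqP => //= _ /and4P[cl cr rl rr].
by rewrite IHl // IHr // !child_ok_ungraft.
Qed.

Lemma canon_ungraft k t : canon t -> canon (ungraft k t).
Proof.
elim: t => [x|k' l IHl r IHr] //=; case: eqP => //= _ /and3P[m cl cr].
by rewrite !minleaf_ungraft m IHl // IHr.
Qed.

Lemma ungraft_graft a b k t :
  (a < b)%N -> k \notin ranks t -> ungraft k (graft a b k t) = t.
Proof.
move=> ab; elim: t => [x|k' l IHl r IHr].
  by rewrite /=; case: eqP => [->|] //= _; rewrite eqxx /minn ab.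
by rewrite notin_ranks_node /= => /and3P[/negbTE -> kl kr]; rewrite IHl // IHr.
Qed.

Lemma cherry_graft a b k t :
  k \notin ranks t -> a \in leaves t -> cherry k (graft a b k t) = Some (a, b).
Proof.
have cherry_none u : k \notin ranks u -> cherry k u = None.
  elim: u => [x|k' l IHl r IHr] //.
  by rewrite notin_ranks_node /= => /and3P[/negbTE -> kl kr]; rewrite IHl // IHr.
elim: t => [x|k' l IHl r IHr]; first by rewrite /= inE => _ /eqP ->; rewrite eqxx /= eqxx.
rewrite notin_ranks_node /= mem_cat => /and3P[/negbTE -> kl kr].
case al: (a \in leaves l) => /=; first by rewrite IHl.
by move=> ar; rewrite graft_id ?al // cherry_none // IHr.
Qed.

Lemma uniq_cat_memN (T : eqType) (s1 s2 : seq T) x :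
  uniq (s1 ++ s2) -> x \in s1 -> x \notin s2.
Proof. by rewrite cat_uniq => /and3P[_ /hasPn s12 _] xs1; apply: contraL xs1 => /s12. Qed.

Lemma graft_ungraft_max k t :
  rank_ok t -> canon t -> uniq (ranks t) -> uniq (leaves t) ->
  k \in ranks t -> all (fun r => r <= k)%N (ranks t) ->
  exists a b, [/\ (a < b)%N, a \in leaves t & graft a b k (ungraft k t) = t].
Proof.
elim: t => [x|k' l IHl r IHr] //=.
case/and4P=> cl cr rl rr /and3P[m canl canr] /andP[k'n ur] ul.
rewrite inE all_cat => kin /andP[k'k /andP[all_l all_r]].
have [ek|nk] := eqVneq k' k.
  subst k'; case: l r cl cr m all_l all_r {IHl IHr rl rr canl canr ul ur k'n kin} =>
      [x|k1 l1 r1] [y|k2 l2 r2] /=.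
  - by move=> _ _ m _ _; exists x, y; rewrite inE eqxx /minn m eqxx.
  - by move=> _ k_k2 _ _ /andP[k2_k _]; lia.
  - by move=> k_k1 _ _ /andP[k1_k _]; lia.
  - by move=> k_k1 _ _ /andP[k1_k _]; lia.
rewrite eq_sym (negbTE nk) /= mem_cat in kin.
move: (ur) (ul); rewrite !cat_uniq => /and3P[url _ urr] /and3P[ull _ ulr].
case/orP: kin => [kl|kr].
  have [a [b [ab al El]]] := IHl rl canl url ull kl all_l.
  exists a, b; rewrite mem_cat al /= El ungraft_id ?graft_id //.
    exact: uniq_cat_memN ul al.
  exact: uniq_cat_memN ur kl.
have [a [b [ab ar Er]]] := IHr rr canr urr ulr kr all_r.
rewrite uniq_catC in ul; rewrite uniq_catC in ur.
exists a, b; rewrite mem_cat ar orbT /= Er ungraft_id ?graft_id //.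
  exact: uniq_cat_memN ul ar.
exact: uniq_cat_memN ur kr.
Qed.

Lemma sumr_const_seq (V : nmodType) (I : Type) (s : seq I) (c : V) :
  \sum_(i <- s) c = c *+ size s.
Proof. by rewrite big_const_seq count_predT iter_addr_0. Qed.

Lemma iota1S n : perm_eq (iota 1 n.+1) (n.+1 :: iota 1 n).
Proof. by rewrite -{1}[n.+1]addn1 iotaD perm_catC. Qed.

Definition pairs (L : seq nat) : seq (nat * nat) :=
  [seq (a, b) | a <- L, b <- [seq b <- L | (a < b)%N]].

Lemma mem_pairs L a b : ((a, b) \in pairs L) = [&& a \in L, b \in L & (a < b)%N].
Proof.
apply/allpairsPdep/idP => [[x [y [xL]]]|/and3P[aL bL ab]].
  by rewrite mem_filter => /andP[xy yL] [-> ->]; rewrite xL yL xy.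
by exists a, b; rewrite mem_filter ab bL.
Qed.

Lemma uniq_pairs L : uniq L -> uniq (pairs L).
Proof.
move=> uL; apply: allpairs_uniq_dep => // [x _|[x1 y1] [x2 y2] _ _ [-> ->]] //.
exact: filter_uniq.
Qed.

Lemma count_gt_add_lt L x : uniq L -> x \in L ->
  (count (fun y => x < y) L + count (fun y => y < x) L)%N = (size L).-1.
Proof.
move=> uL xL; rewrite -(count_predC (pred1 x)) count_uniq_mem // xL add1n /=.
rewrite -count_predUI [count (predI _ _) _](@eq_count _ _ pred0) => [|y /=].
  by rewrite count_pred0 addn0; apply: eq_count => y /=; rewrite neq_ltn orbC.
by apply/negbTE/andP => -[]; lia.
Qed.

Lemma sum_pairs (V : nmodType) (phi : nat -> V) L : uniq L ->
  \sum_(p <- pairs L) (phi p.1 + phi p.2) = (\sum_(x <- L) phi x) *+ (size L).-1.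
Proof.
move=> uL; rewrite big_allpairs_dep /=.
under eq_bigr do rewrite big_filter big_split /=.
rewrite big_split /= [X in _ + X](exchange_big_dep xpredT) //= -big_split -sumrMnl.
apply: eq_big_seq => x xL /=.
by rewrite !big_const_seq !iter_addr_0 -mulrnDr count_gt_add_lt.
Qed.

Lemma size_pairs L : uniq L -> size (pairs L) = 'C(size L, 2).
Proof.
have natmulE (x k : nat) : x *+ k = (x * k)%N by rewrite -mulr_natr natn.
move=> uL; have := sum_pairs (fun=> 1%N) uL.
rewrite !sumr_const_seq !natmulE natrDE mul1n => two_pairs.
by rewrite bin2 -two_pairs mulnDl mul1n addnn doubleK.
Qed.

Lemma sum_rem_zero (V : zmodType) (phi : nat -> V) L a b :
  uniq L -> a \in L -> b \in L -> a != b ->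
  \sum_(x <- rem b L) (if x == a then 0 else phi x) = \sum_(x <- L) phi x - (phi a + phi b).
Proof.
move=> uL aL bL ab.
have a_rem : a \in rem b L by rewrite (mem_rem_uniq _ uL) inE ab.
rewrite [in RHS](big_rem b) // [in RHS](big_rem a a_rem) (big_rem a a_rem) /= eqxx add0r.
rewrite addrCA addrA [X in X - _]addrC addrK; apply: eq_big_seq => x.
by rewrite (mem_rem_uniq _ (rem_uniq _ uL)) inE => /andP[/negbTE ->].
Qed.

Definition ranked_on (L : seq nat) (w : rtree) : bool :=
  [&& perm_eq (leaves w) L, perm_eq (ranks w) (iota 1 (size L).-1),
      rank_ok w & canon w].

Fixpoint ranked_trees (m : nat) (L : seq nat) : seq rtree :=
  if m is m'.+1 then
    [seq graft p.1 p.2 m w | p <- pairs L, w <- ranked_trees m' (rem p.2 L)]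
  else [seq RLeaf x | x <- L].

Fixpoint num_ranked_trees (m : nat) : nat :=
  if m is m'.+1 then 'C(m.+1, 2) * num_ranked_trees m' else 1.

Lemma num_ranked_trees_gt0 m : (0 < num_ranked_trees m)%N.
Proof. by elim: m => //= m IH; rewrite muln_gt0 bin_gt0 IH. Qed.

Section GraftTopCherry.

Variables (m : nat) (L : seq nat).
Hypotheses (uniqL : uniq L) (sizeL : size L = m.+2).

Lemma ranked_on_rem a b w : (a, b) \in pairs L -> ranked_on (rem b L) w ->
  [/\ a \in leaves w, count_mem a (leaves w) = 1%N, m.+1 \notin ranks w
    & all (fun r => r < m.+1)%N (ranks w)].
Proof.
rewrite mem_pairs => /and3P[aL bL ab] /and4P[Pl Pr _ _].
have a_rem : a \in rem b L by rewrite (mem_rem_uniq _ uniqL) inE aL andbT neq_ltn ab.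
rewrite size_rem // sizeL /= in Pr.
split.
- by rewrite (perm_mem Pl).
- by rewrite (permP Pl) count_uniq_mem ?a_rem ?rem_uniq.
- by rewrite (perm_mem Pr) mem_iota; lia.
- by apply/allP => r; rewrite (perm_mem Pr) mem_iota; lia.
Qed.

Lemma graft_ranked_on a b w : (a, b) \in pairs L -> ranked_on (rem b L) w ->
  ranked_on L (graft a b m.+1 w).
Proof.
move=> abL wL; have [_ a_once _ ranks_lt] := ranked_on_rem abL wL.
move: abL wL; rewrite mem_pairs => /and3P[aL bL ab] /and4P[Pl Pr ro co].
rewrite size_rem // sizeL /= in Pr.
apply/and4P; split; [| |exact: rank_ok_graft ro ranks_lt|exact: canon_graft].
- apply: perm_trans (leaves_graft _ _ _ _) _; rewrite a_once perm_sym.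
  by apply: perm_trans (perm_to_rem bL) _; rewrite perm_cons perm_sym.
- rewrite sizeL; apply: perm_trans (ranks_graft _ _ _ _) _; rewrite a_once perm_sym.
  by apply: perm_trans (iota1S m) _; rewrite perm_cons perm_sym.
Qed.

Lemma ranked_on_ungraft w : ranked_on L w ->
  exists2 p, p \in pairs L &
    ranked_on (rem p.2 L) (ungraft m.+1 w) /\ graft p.1 p.2 m.+1 (ungraft m.+1 w) = w.
Proof.
case/and4P => Pl Pr ro co; rewrite sizeL in Pr.
have ul : uniq (leaves w) by rewrite (perm_uniq Pl).
have ur : uniq (ranks w) by rewrite (perm_uniq Pr) iota_uniq.
have top_rank : m.+1 \in ranks w by rewrite (perm_mem Pr) mem_iota; lia.
have ranks_le : all (fun r => r <= m.+1)%N (ranks w).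
  by apply/allP => r; rewrite (perm_mem Pr) mem_iota; lia.
have [a [b [ab aw Ew]]] := graft_ungraft_max ro co ur ul top_rank ranks_le.
set w' := ungraft m.+1 w in Ew *.
have a_once : count_mem a (leaves w') = 1%N.
  have := permP (leaves_graft a b m.+1 w') (pred1 a).
  by rewrite Ew count_cat count_nseq /= eq_sym (ltn_eqF ab) (count_uniq_mem _ ul) aw.
have Pg := leaves_graft a b m.+1 w'; have Rg := ranks_graft a b m.+1 w'.
rewrite a_once Ew perm_sym /= in Pg; rewrite a_once Ew perm_sym /= in Rg.
have bL : b \in L by rewrite -(perm_mem Pl) -(perm_mem Pg) inE eqxx.
have aL : a \in L by rewrite -(perm_mem Pl).
exists (a, b); first by rewrite mem_pairs aL bL ab.
split=> //; apply/and4P; split; [| |exact: rank_ok_ungraft|exact: canon_ungraft].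
- rewrite /= -(perm_cons b).
  exact: perm_trans Pg (perm_trans Pl (perm_to_rem bL)).
- rewrite /= size_rem // sizeL /= -(perm_cons m.+1).
  exact: perm_trans Rg (perm_trans Pr (iota1S m)).
Qed.

Lemma graft_inj p1 p2 w1 w2 : p1 \in pairs L -> p2 \in pairs L ->
  ranked_on (rem p1.2 L) w1 -> ranked_on (rem p2.2 L) w2 ->
  graft p1.1 p1.2 m.+1 w1 = graft p2.1 p2.2 m.+1 w2 -> p1 = p2 /\ w1 = w2.
Proof.
case: p1 p2 => [a1 b1] [a2 b2] /= p1L p2L w1L w2L eq_graft.
have [a1w _ k1 _] := ranked_on_rem p1L w1L.
have [a2w _ k2 _] := ranked_on_rem p2L w2L.
have := congr1 (cherry m.+1) eq_graft; rewrite !cherry_graft // => -[ea eb]; subst a2 b2.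
have ab1 : (a1 < b1)%N by move: p1L; rewrite mem_pairs => /and3P[].
by rewrite -(ungraft_graft ab1 k1) eq_graft ungraft_graft.
Qed.

End GraftTopCherry.

Lemma mem_ranked_trees m L : uniq L -> size L = m.+1 ->
  forall w, (w \in ranked_trees m L) = ranked_on L w.
Proof.
elim: m L => [|m IH] L uL sL w.
  case: L uL sL => [|x [|y L]] // _ _; rewrite /= inE /ranked_on /=.
  apply/eqP/idP => [->|]; first by rewrite !perm_refl.
  case: w => [y|k l r] /=; last by case/and4P=> _ /perm_size.
  by case/andP=> /perm_mem/(_ y); rewrite !inE eqxx => /esym/eqP ->.
have IHrem p w' : p \in pairs L ->
    (w' \in ranked_trees m (rem p.2 L)) = ranked_on (rem p.2 L) w'.
  case: p => a b; rewrite mem_pairs => /and3P[_ bL _].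
  by rewrite IH ?rem_uniq ?size_rem ?sL.
apply/allpairsPdep/idP => [[[a b] [w' [pL w'E ->]]]|wL].
  by apply: graft_ranked_on; rewrite -?IHrem.
have [p pL [w'L Ew]] := ranked_on_ungraft uL sL wL.
by exists p, (ungraft m.+1 w); rewrite IHrem.
Qed.

Lemma uniq_ranked_trees m L : uniq L -> size L = m.+1 -> uniq (ranked_trees m L).
Proof.
elim: m L => [|m IH] L uL sL /=; first by rewrite map_inj_uniq // => x y [].
have uniq_rem p : p \in pairs L -> uniq (rem p.2 L) by move=> _; exact: rem_uniq.
have size_rem p : p \in pairs L -> size (rem p.2 L) = m.+1.
  by case: p => a b; rewrite mem_pairs => /and3P[_ bL _]; rewrite size_rem ?sL.
apply: allpairs_uniq_dep => [|p pL|]; first exact: uniq_pairs.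
  exact: IH (uniq_rem p pL) (size_rem p pL).
move=> _ _ /allpairsPdep[p1 [w1 [p1L w1E ->]]] /allpairsPdep[p2 [w2 [p2L w2E ->]]].
rewrite (mem_ranked_trees (uniq_rem p1 p1L) (size_rem p1 p1L)) in w1E.
rewrite (mem_ranked_trees (uniq_rem p2 p2L) (size_rem p2 p2L)) in w2E.
by case/(graft_inj uL sL p1L p2L w1E w2E) => -> ->.
Qed.

Lemma size_ranked_trees m L :
  uniq L -> size L = m.+1 -> size (ranked_trees m L) = num_ranked_trees m.
Proof.
elim: m L => [|m IH] L uL sL /=; first by rewrite size_map sL.
have size_sub : {in pairs L, forall p,
    size (ranked_trees m (rem p.2 L)) = num_ranked_trees m}.
  by move=> [a b]; rewrite mem_pairs => /and3P[_ bL _]; rewrite IH ?rem_uniq ?size_rem ?sL.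
rewrite size_allpairs_dep sumnE big_map (eq_big_seq _ size_sub).
by rewrite big_const_seq count_predT iter_addn_0 size_pairs // sL mulnC.
Qed.

Section LeafChildrenWeight.

Variable V : nmodType.
Implicit Type phi : nat -> V.

Definition leaf_weight phi (t : rtree) : V := if t is RLeaf x then phi x else 0.

Fixpoint leaf_children_weight (j : nat) phi (t : rtree) : V :=
  match t with
  | RLeaf _ => 0
  | RNode k l r =>
      if k == j then leaf_weight phi l + leaf_weight phi r
      else leaf_children_weight j phi l + leaf_children_weight j phi r
  end.

Lemma leaf_children_weight_graft_neq j phi a b k t : j != k ->
  leaf_children_weight j phi (graft a b k t)
    = leaf_children_weight j (fun x => if x == a then 0 else phi x) t.
Proof.
have leaf_weight_graft u : leaf_weight phi (graft a b k u)
    = leaf_weight (fun x => if x == a then 0 else phi x) u.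
  by case: u => [x|k' l r] //=; case: eqP.
move=> jk; elim: t => [x|k' l IHl r IHr] /=.
  by case: eqP => //= _; rewrite eq_sym (negbTE jk) addr0.
by rewrite !leaf_weight_graft IHl IHr.
Qed.

Lemma leaf_children_weight_graft_eq phi a b k t : k \notin ranks t ->
  leaf_children_weight k phi (graft a b k t)
    = (phi a + phi b) *+ count_mem a (leaves t).
Proof.
elim: t => [x|k' l IHl r IHr].
  by move=> _ /=; rewrite eq_sym; case: eqP => //= ->; rewrite eqxx.
rewrite notin_ranks_node /= => /and3P[/negbTE -> kl kr].
by rewrite IHl // IHr // count_cat mulrnDr.
Qed.

End LeafChildrenWeight.

Lemma natr_B (R : pzSemiRingType) j t :
  (B j t)%:R = leaf_children_weight j (fun=> 1 : R) t.
Proof.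
elim: t => [x|k l IHl r IHr] //=; case: eqP => _; last by rewrite natrD IHl IHr.
by rewrite natrD; case: l {IHl} => [?|???]; case: r {IHr} => [?|???].
Qed.

Lemma sum_leaf_children_weight_graft_top (V : nmodType) m L (phi : nat -> V) a b :
  uniq L -> size L = m.+2 -> (a, b) \in pairs L ->
  \sum_(w <- ranked_trees m (rem b L)) leaf_children_weight m.+1 phi (graft a b m.+1 w)
    = (phi a + phi b) *+ num_ranked_trees m.
Proof.
move=> uL sL abL; have bL : b \in L by move: abL; rewrite mem_pairs => /and3P[].
have uR : uniq (rem b L) by rewrite rem_uniq.
have sR : size (rem b L) = m.+1 by rewrite size_rem ?sL.
rewrite -(size_ranked_trees uR sR) -sumr_const_seq; apply: eq_big_seq => w.
rewrite mem_ranked_trees // => wR; have [_ a_once top_notin _] := ranked_on_rem uL sL abL wR.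
by rewrite leaf_children_weight_graft_eq // a_once.
Qed.

Lemma sum_leaf_children_weight (R : numFieldType) m L (phi : nat -> R) j :
  uniq L -> size L = m.+1 -> (1 <= j <= m)%N ->
  \sum_(w <- ranked_trees m L) leaf_children_weight j phi w
    = (num_ranked_trees m)%:R * (j%:R / 'C(m.+1, 2)%:R) * \sum_(x <- L) phi x.
Proof.
elim: m L phi => [|m IH] L phi uL sL jm; first by lia.
have binS2 : 'C(m.+2, 2) = ('C(m.+1, 2) + m.+1)%N by rewrite binS bin1.
have bin_neq0 k : (1 <= k)%N -> 'C(k.+1, 2)%:R != 0 :> R.
  by move=> k_gt0; rewrite pnatr_eq0 -lt0n bin_gt0.
rewrite big_allpairs_dep /=.
have [-> | j_neq] := eqVneq j m.+1.
  rewrite (eq_big_seq (fun p => (phi p.1 + phi p.2) *+ num_ranked_trees m)) => [|[a b] abL].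
    by rewrite sumrMnl sum_pairs // sL -mulrnA -mulr_natl /= natrM; field; rewrite bin_neq0.
  exact: sum_leaf_children_weight_graft_top.
transitivity (\sum_(p <- pairs L) (num_ranked_trees m)%:R * (j%:R / 'C(m.+1, 2)%:R)
                                 * (\sum_(x <- L) phi x - (phi p.1 + phi p.2))).
  apply: eq_big_seq => -[a b]; rewrite mem_pairs => /and3P[aL bL ab] /=.
  under eq_bigr do rewrite leaf_children_weight_graft_neq //.
  rewrite IH ?rem_uniq ?size_rem ?sL ?sum_rem_zero // ?neq_ltn ?ab //; lia.
rewrite -mulr_sumr sumrB sum_pairs // [\sum_(p <- pairs L) _]sumr_const_seq size_pairs //.
rewrite -[_ *+ 'C(_, _)]mulr_natr -[_ *+ (size L).-1]mulr_natr sL binS2 /= natrD natrM.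
by field; rewrite nat1r -natrD -binS2 !bin_neq0 //; lia.
Qed.

Theorem corollary3 (n j : nat) :
  (2 <= n)%N -> (1 <= j <= n.-1)%N ->
  (exists s : seq rtree, enumW n s) /\
  forall s : seq rtree, enumW n s ->
    (\sum_(w <- s) ((B j w)%:R / n%:R)) / (size s)%:R
      = j%:R / ('C(n, 2))%:R :> rat.
Proof.
case: n => // m n_ge2 /= j_range; set L := iota 1 m.+1.
have uL : uniq L := iota_uniq 1 m.+1.
have sL : size L = m.+1 := size_iota 1 m.+1.
have W_ranked w : (w \in ranked_trees m L) = inW m.+1 w.
  by rewrite mem_ranked_trees // /ranked_on sL.
split=> [|s [uniq_s mem_s]].
  by exists (ranked_trees m L); split; [exact: uniq_ranked_trees | exact: W_ranked].
have perm_s : perm_eq s (ranked_trees m L).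
  by apply: uniq_perm; rewrite ?uniq_ranked_trees // => w; rewrite mem_s W_ranked.
rewrite (perm_big _ perm_s) (perm_size perm_s) size_ranked_trees // -mulr_suml.
under eq_bigr do rewrite natr_B.
rewrite sum_leaf_children_weight // sumr_const_seq sL.
have num_ranked_trees_neq0 : (num_ranked_trees m)%:R != 0 :> rat.
  by rewrite pnatr_eq0 -lt0n num_ranked_trees_gt0.
by field; rewrite num_ranked_trees_neq0 nat1r !pnatr_eq0 -lt0n bin_gt0 n_ge2.
Qed.
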